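(* Let $G=(V,E)$ be a finite simple undirected graph with zipper constraint collection $\mathcal{Z}$, let $D\subseteq Z^2$, and let $\mathbb{S}\subseteq D$ be a prescription on $D$. Let $S^+\subseteq V^+$ be a set of vertices of the augmented graph $G^+(\mathbb{S})$, and let $S\subseteq V$ be its distillate. Then $S^+$ is a clique in $G^+(\mathbb{S})$ if and only if $S$ is a clique in $G'=(V,E\setminus(D\setminus\mathbb{S}))$.
   Context: A zipper constraint collection for $G$ is a finite set $\mathcal{Z}=\{(U_1,W_1,y_1),\dots,(U_m,W_m,y_m)\}$, where each $U_i,W_i\in E$ is an edge of $G$ (a 2-element subset of $V$) and each $y_i$ is a label. Let $Z^2=\{U_1,\dots,U_m,W_1,\dots,W_m\}$. A prescription on a domain $D\subseteq Z^2$ is a subset $\mathbb{S}\subseteq D$. Its elements are on pairs, and the elements of $D\setminus\mathbb{S}$ are off pairs. Let $G'=(V,E\setminus(D\setminus\mathbb{S}))$. The augmented graph $G^+(\mathbb{S})=(V^+,E^+)$ has vertex set $V^+=\{[u]:u\in V\}\cup\{[u,w]:\{u,w\}\in\mathbb{S}\}$. Each vertex $[A]$ is a new formal vertex labeled by the set $A$, which is either a singleton $\{u\}$ or a pair $\{u,w\}$. Two distinct vertices $[A],[B]$ are adjacent if and only if $A\cup B$ is a clique in $G'$. The distillate of a set $S^+=\{[A_1],\dots,[A_n]\}\subseteq V^+$ is the set $A_1\cup\dots\cup A_n\subseteq V$. *)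

From mathcomp Require Import all_boot.
From Stdlib Require List.
Set Implicit Arguments. Unset Strict Implicit. Unset Printing Implicit Defensive.

Definition simple_graph (V : finType) (E : {set {set V}}) : Prop :=
  forall e, e \in E -> #|e| = 2.

Definition zipper_collection (V : finType) (L : Type) (E : {set {set V}})
  (Z : seq ({set V} * {set V} * L)) : Prop :=
  forall t, List.In t Z -> t.1.1 \in E /\ t.1.2 \in E.

Definition Z2 (V : finType) (L : Type) (Z : seq ({set V} * {set V} * L))
  : {set {set V}} :=
  [set X | has (fun t => (t.1.1 == X) || (t.1.2 == X)) Z].

Definition Gprime_edges (V : finType) (E D S : {set {set V}}) : {set {set V}} :=
  E :\: (D :\: S).

Definition clique (V : finType) (F : {set {set V}}) (A : {set V}) : Prop :=
  forall u w, u \in A -> w \in A -> u != w -> [set u; w] \in F.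

(* Vertex set of the augmented graph G^+(S): the formal vertex [A] is
   represented by its label A (a singleton {u} or a pair {u,w} in S). *)
Definition aug_vertices (V : finType) (S : {set {set V}}) : {set {set V}} :=
  [set [set u] | u : V] :|: S.

Definition aug_adj (V : finType) (E D S : {set {set V}}) (A B : {set V}) : Prop :=
  A != B /\ clique (Gprime_edges E D S) (A :|: B).

Definition aug_clique (V : finType) (E D S : {set {set V}}) (Splus : {set {set V}}) : Prop :=
  forall A B, A \in Splus -> B \in Splus -> A != B -> aug_adj E D S A B.

Definition distillate (V : finType) (Splus : {set {set V}}) : {set V} :=
  \bigcup_(A in Splus) A.

From mathcomp Require Import all_boot.
From Stdlib Require List.

Set Implicit Arguments.
Unset Strict Implicit.
Unset Printing Implicit Defensive.

(* Every vertex [A] of the augmented graph is itself a clique of G': a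
   singleton trivially, and a pair of S is an edge of G that is kept in G'.
   A union of pairwise adjacent cliques is then a clique, and conversely. *)

Section Cliques.

Variables (V : finType) (F : {set {set V}}).

Lemma clique_subset (A B : {set V}) : A \subset B -> clique F B -> clique F A.
Proof. by move=> /subsetP sAB cB u w /sAB uB /sAB wB; exact: cB. Qed.

Lemma clique_set1 (u : V) : clique F [set u].
Proof. by move=> x y /set1P -> /set1P ->; rewrite eqxx. Qed.

Lemma clique_edge (A : {set V}) : #|A| = 2 -> A \in F -> clique F A.
Proof.
move=> cardA AF u w uA wA uw.
suff -> : [set u; w] = A by [].
apply/eqP; rewrite eqEcard cardA cards2 uw andbT.
by apply/subsetP => x /set2P [] ->.
Qed.

Lemma clique_bigcupP (P : {set {set V}}) :
  {in P, forall A, clique F A} ->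
  clique F (\bigcup_(A in P) A) <->
  {in P &, forall A B, A != B -> clique F (A :|: B)}.
Proof.
move=> cP; split=> [cU A B PA PB _ | cAB].
  by apply: clique_subset cU; rewrite subUset !(bigcup_sup _ PA, bigcup_sup _ PB).
move=> u w /bigcupP [A PA uA] /bigcupP [B PB wB].
have [eAB | nAB] := eqVneq A B; first by rewrite -eAB in wB; apply: (cP A).
by apply: (cAB A B PA PB nAB); rewrite inE (uA, wB) ?orbT.
Qed.

End Cliques.

Lemma Z2_sub_edges (V : finType) (L : Type) (E : {set {set V}})
  (Z : seq ({set V} * {set V} * L)) :
  zipper_collection E Z -> Z2 Z \subset E.
Proof.
move=> HZ; apply/subsetP => X; rewrite inE.
(* [has] and [List.existsb] are the same fixpoint. *)
by move/List.existsb_exists => [t [tZ /orP []]] /eqP <-; case: (HZ t tZ).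
Qed.

Lemma aug_vertices_clique (V : finType) (E D S : {set {set V}}) :
  simple_graph E -> S \subset E ->
  {in aug_vertices S, forall A, clique (Gprime_edges E D S) A}.
Proof.
move=> HE /subsetP SE A; rewrite inE => /orP [/imsetP [u _ ->] | AS].
  exact: clique_set1.
apply: clique_edge; first exact/HE/SE.
by rewrite /Gprime_edges !inE AS SE.
Qed.

Theorem mainTheorem2 (V : finType) (L : Type) (E : {set {set V}})
  (HE : simple_graph E) (Z : seq ({set V} * {set V} * L))
  (HZ : zipper_collection E Z) (D : {set {set V}}) (HD : D \subset Z2 Z)
  (S : {set {set V}}) (HS : S \subset D)
  (Splus : {set {set V}}) (HSp : Splus \subset aug_vertices S) :
  aug_clique E D S Splus <-> clique (Gprime_edges E D S) (distillate Splus).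
Proof.
have SE : S \subset E by rewrite (subset_trans HS) // (subset_trans HD) // Z2_sub_edges.
have vertex_clique := aug_vertices_clique D HE SE.
rewrite /distillate clique_bigcupP => [|A /(subsetP HSp)]; last exact: vertex_clique.
split=> cP A B PA PB nAB; first by case: (cP A B PA PB nAB).
by split; last exact: cP.
Qed.
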